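(* Consider the system $\dot v_1=-v_1^2+v_2$, $\dot v_2=-v_1v_2$ with initial data $(v_1(0),v_2(0))\in\mathbb{R}^2$. Its solution blows up in finite positive time if and only if one of the following holds: $v_2(0)<0$; or $v_2(0)=0$ and $v_1(0)<0$; or $v_2(0)>0$, $v_1(0)<0$ and $v_1(0)^2\ge 2v_2(0)$.
   Context: This is the extended system $\dot{\mathbf v}=-v_1\mathbf v+Q\mathbf v$ with $Q=\begin{pmatrix}0&1\\0&0\end{pmatrix}$, governing $(v_1,v_2)=(V_x,E_x)$ along characteristics for the pressureless Euler–Poisson system $V_t+VV_x=kE-\gamma V$, $E_t+VE_x=NV$ with $k=1$, $N=0$, $\gamma=0$. (The paper's text writes ''$v_2(0)=0$, $v_1(0)>0$'' in the second case, which is a misprint for $v_1(0)<0$.) *)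

From Stdlib Require Import Reals.
From Coquelicot Require Import Coquelicot.
Open Scope R_scope.

Definition is_solution_on (a b T : R) (v1 v2 : R -> R) : Prop :=
  v1 0 = a /\ v2 0 = b /\
  forall t : R, 0 <= t < T ->
    is_derive v1 t (- (v1 t) ^ 2 + v2 t) /\
    is_derive v2 t (- (v1 t * v2 t)).

Definition blows_up_in_finite_time (a b : R) : Prop :=
  exists T : R, 0 < T /\
  exists v1 v2 : R -> R, is_solution_on a b T v1 v2 /\
    ~ (exists M : R, forall t : R, 0 <= t < T -> Rabs (v1 t) + Rabs (v2 t) <= M).

From Stdlib Require Import Reals Lra Classical.
From Coquelicot Require Import Coquelicot.
Open Scope R_scope.

(* Every solution is explicit: with q(t) = 1 + a t + b t^2/2 one has
   v1 = (a + b t)/q and v2 = b/q.  Uniqueness comes from the function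
   D = 1 - v1 t + v2 t^2/2, which satisfies D' = -v1 D, as do v2 and v1 - v2 t;
   hence v2 = b D and v1 - v2 t = a D, and substituting into the definition of D
   gives D q = 1.  So a solution blows up exactly when q has a positive root,
   and the root condition on (a, b) is elementary. *)

Lemma is_derive_continuity_pt (f : R -> R) (x l : R) :
  is_derive f x l -> continuity_pt f x.
Proof.
intros H. apply derivable_continuous_pt. exists l. now apply is_derive_Reals.
Qed.

Lemma continuity_pt_ball (f : R -> R) (x eps : R) :
  continuity_pt f x -> 0 < eps ->
  exists d, 0 < d /\ forall y, Rabs (y - x) < d -> Rabs (f y - f x) < eps.
Proof.
intros H He. destruct (H eps He) as [d [Hd Hy]]. exists d. split; [lra|].
intros y Hyd. destruct (Req_dec y x) as [->|Hne].
- unfold Rminus. rewrite Rplus_opp_r, Rabs_R0. lra.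
- apply (Hy y). repeat split; auto.
Qed.

Lemma continuity_pt_lt_left (f : R -> R) (s c : R) :
  continuity_pt f s -> 0 < s -> f s < c -> exists t, 0 <= t < s /\ f t < c.
Proof.
intros Hf Hs Hc. destruct (continuity_pt_ball f s (c - f s) Hf) as [d [Hd Hy]]; [lra|].
exists (Rmax 0 (s - d / 2)). split.
- apply Rmax_case_strong; intros; lra.
- assert (Hdist : Rabs (Rmax 0 (s - d / 2) - s) < d)
    by (apply Rmax_case_strong; intros; apply Rabs_def1; lra).
  specialize (Hy _ Hdist). apply Rabs_def2 in Hy. lra.
Qed.

Lemma continuity_pt_gt_right (f : R -> R) (s : R) :
  continuity_pt f s -> 0 < f s ->
  exists d, 0 < d /\ forall t, s <= t < s + d -> 0 < f t.
Proof.
intros Hf Hs. destruct (continuity_pt_ball f s (f s) Hf Hs) as [d [Hd Hy]].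
exists d. split; [exact Hd|]. intros t Ht.
assert (Hdist : Rabs (t - s) < d) by (apply Rabs_def1; lra).
specialize (Hy _ Hdist). apply Rabs_def2 in Hy. lra.
Qed.

(* The least root of a continuous function which is positive at 0 and
   nonpositive at t1, obtained as the supremum of the initial intervals of
   positivity. *)
Lemma first_root (f : R -> R) (t1 : R) :
  0 <= t1 -> 0 < f 0 -> f t1 <= 0 ->
  (forall t, 0 <= t <= t1 -> continuity_pt f t) ->
  exists s, 0 < s <= t1 /\ f s = 0 /\ forall t, 0 <= t < s -> 0 < f t.
Proof.
intros Ht1 H0 H1 Hc.
set (E := fun x => 0 <= x <= t1 /\ forall t, 0 <= t <= x -> 0 < f t).
assert (E0 : E 0)
  by (split; [lra|]; intros t Ht; replace t with 0 by lra; exact H0).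
destruct (completeness E) as [s [Hub Hlub]].
{ exists t1. intros x [Hx _]. lra. }
{ now exists 0. }
assert (Hs0 : 0 <= s) by now apply Hub.
assert (Hs1 : s <= t1) by (apply Hlub; intros x [Hx _]; lra).
assert (Hpos : forall t, 0 <= t < s -> 0 < f t).
{ intros t Ht. apply Rnot_le_lt. intros Hft.
  assert (s <= t); [|lra]. apply Hlub. intros x [_ Hx].
  apply Rnot_lt_le. intros Htx. specialize (Hx t). lra. }
assert (Hfs : f s = 0).
{ destruct (Rtotal_order (f s) 0) as [Hn|[Hz|Hp]]; [exfalso | exact Hz | exfalso].
  - destruct (Req_dec s 0) as [->|Hs]; [lra|].
    destruct (continuity_pt_lt_left f s 0) as [t [Ht Hft]]; auto; [lra|].
    specialize (Hpos t Ht). lra.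
  - destruct (Req_dec s t1) as [->|Hs]; [lra|].
    destruct (continuity_pt_gt_right f s) as [d [Hd Hright]]; auto.
    set (y := Rmin t1 (s + d / 2)).
    assert (Ey : E y).
    { split; [unfold y; apply Rmin_case_strong; intros; lra|].
      intros t Ht. destruct (Rlt_le_dec t s); [apply Hpos; lra|].
      apply Hright. revert Ht. unfold y. apply Rmin_case_strong; intros; lra. }
    specialize (Hub y Ey). revert Hub. unfold y. apply Rmin_case_strong; intros; lra. }
exists s. repeat split; auto.
destruct Hs0 as [Hs|<-]; [exact Hs | lra].
Qed.

Lemma is_derive_zero_const (f : R -> R) (s : R) :
  (forall t, 0 <= t < s -> is_derive f t 0) -> forall t, 0 <= t < s -> f t = f 0.
Proof.
intros H t Ht. destruct (Req_dec t 0) as [->|Hne]; [reflexivity|].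
destruct (MVT_cor2 f (fun _ => 0) 0 t) as [c [Hc _]]; [lra| |lra].
intros c Hc. apply is_derive_Reals, H. lra.
Qed.

Lemma is_derive_linear_proportional (f g c : R -> R) (s : R) :
  (forall t, 0 <= t < s ->
     is_derive f t (c t * f t) /\ is_derive g t (c t * g t) /\ 0 < g t) ->
  forall t, 0 <= t < s -> f t * g 0 = f 0 * g t.
Proof.
intros H t Ht.
assert (Hg0 : 0 < g 0) by (apply H; lra).
assert (Hgt : 0 < g t) by (apply H; lra).
assert (Hratio : f t / g t = f 0 / g 0).
{ apply (is_derive_zero_const (fun u => f u / g u) s); [|exact Ht].
  intros u Hu. destruct (H u Hu) as [Hf [Hg Hgu]].
  replace 0 with ((c u * f u * g u - f u * (c u * g u)) / g u ^ 2) by (field; lra).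
  apply is_derive_div; auto; lra. }
replace (f t) with (f t / g t * g t) by (field; lra).
rewrite Hratio. field. lra.
Qed.

Definition blowup_condition (a b : R) : Prop :=
  b < 0 \/ (b = 0 /\ a < 0) \/ (0 < b /\ a < 0 /\ 2 * b <= a ^ 2).

Definition denom (a b t : R) : R := 1 + a * t + b * t ^ 2 / 2.

Lemma continuity_pt_denom (a b t : R) : continuity_pt (denom a b) t.
Proof. unfold denom. reg. Qed.

Lemma blowup_condition_denom_nonpos (a b : R) :
  blowup_condition a b -> exists t, 0 <= t /\ denom a b t <= 0.
Proof.
unfold denom. intros [Hb|[[Hb Ha]|[Hb [Ha Hab]]]].
- exists (1 + 2 * (Rabs a + 1) / - b). pose proof (Rabs_pos a).
  assert (0 <= 2 * (Rabs a + 1) / - b) by (apply Rle_mult_inv_pos; lra).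
  set (t := 1 + 2 * (Rabs a + 1) / - b) in *.
  assert (1 <= t) by (unfold t; lra).
  assert (Hbt : b * t / 2 = b / 2 - (Rabs a + 1)) by (unfold t; field; lra).
  assert (a * t <= Rabs a * t) by (apply Rmult_le_compat_r; [lra | apply Rle_abs]).
  replace (b * t ^ 2 / 2) with (b * t / 2 * t) by field. split; nra.
- exists (- 1 / a). subst b. split.
  + replace (-1 / a) with (/ - a) by (field; lra). apply Rlt_le, Rinv_0_lt_compat. lra.
  + replace (1 + a * (-1 / a) + 0 * (-1 / a) ^ 2 / 2) with 0 by (field; lra). lra.
- exists (- a / b). split; [apply Rle_mult_inv_pos; lra|].
  replace (1 + a * (- a / b) + b * (- a / b) ^ 2 / 2) with ((2 * b - a ^ 2) / (2 * b))
    by (field; lra).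
  apply Rmult_le_0_r; [lra | apply Rlt_le, Rinv_0_lt_compat; lra].
Qed.

Lemma not_blowup_condition_denom_lower_bound (a b : R) :
  ~ blowup_condition a b -> exists m, 0 < m /\ forall t, 0 <= t -> m <= denom a b t.
Proof.
unfold blowup_condition, denom. intros Hn.
destruct (Rle_dec 0 a) as [Ha|Ha].
- exists 1. split; [lra|]. intros t Ht.
  assert (0 <= b) by (apply Rnot_lt_le; tauto). nra.
- assert (Hb : 0 < b) by (destruct (Rtotal_order b 0) as [|[|]]; tauto || lra).
  assert (Hab : a ^ 2 < 2 * b) by (apply Rnot_le_lt; intro; apply Hn; right; right; lra).
  exists ((2 * b - a ^ 2) / (2 * b)). split; [apply Rdiv_lt_0_compat; lra|].
  intros t Ht. apply (Rmult_le_reg_r (2 * b)); [lra|].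
  replace ((2 * b - a ^ 2) / (2 * b) * (2 * b)) with (2 * b - a ^ 2) by (field; lra).
  pose proof (pow2_ge_0 (b * t + a)). nra.
Qed.

Section Uniqueness.

Variables (a b T : R) (v1 v2 : R -> R).
Hypothesis Hsol : is_solution_on a b T v1 v2.

(* Equal to exp (- int_0^t v1); it is the reciprocal of [denom a b]. *)
Definition integrating_factor (t : R) : R := 1 - v1 t * t + v2 t * t ^ 2 / 2.

Lemma is_derive_integrating_factor (t : R) :
  0 <= t < T -> is_derive integrating_factor t (- v1 t * integrating_factor t).
Proof.
intros Ht. destruct Hsol as [_ [_ Hd]]. destruct (Hd t Ht) as [H1 H2].
unfold integrating_factor. auto_derive.
- repeat split; eexists; eassumption.
- replace (Derive (fun x => v1 x) t) with (- v1 t ^ 2 + v2 t)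
    by (symmetry; now apply is_derive_unique).
  replace (Derive (fun x => v2 x) t) with (- (v1 t * v2 t))
    by (symmetry; now apply is_derive_unique).
  field.
Qed.

Lemma is_derive_v1_sub_v2_mul (t : R) :
  0 <= t < T -> is_derive (fun u => v1 u - v2 u * u) t (- v1 t * (v1 t - v2 t * t)).
Proof.
intros Ht. destruct Hsol as [_ [_ Hd]]. destruct (Hd t Ht) as [H1 H2].
auto_derive.
- repeat split; eexists; eassumption.
- replace (Derive (fun x => v1 x) t) with (- v1 t ^ 2 + v2 t)
    by (symmetry; now apply is_derive_unique).
  replace (Derive (fun x => v2 x) t) with (- (v1 t * v2 t))
    by (symmetry; now apply is_derive_unique).
  field.
Qed.

Lemma integrating_factor_mul_denom (s : R) :
  s <= T -> (forall t, 0 <= t < s -> 0 < integrating_factor t) ->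
  forall t, 0 <= t < s ->
    v2 t = b * integrating_factor t /\
    v1 t = (a + b * t) * integrating_factor t /\
    integrating_factor t * denom a b t = 1.
Proof.
intros HsT Hpos t Ht. destruct Hsol as [Ha [Hb Hd]].
assert (HD0 : integrating_factor 0 = 1) by (unfold integrating_factor; simpl; field).
assert (E1 : v2 t = b * integrating_factor t).
{ assert (P : v2 t * integrating_factor 0 = v2 0 * integrating_factor t).
  { apply (is_derive_linear_proportional v2 integrating_factor (fun u => - v1 u) s);
      [|exact Ht].
    intros u Hu. split; [|split; [apply is_derive_integrating_factor | apply Hpos]; lra].
    replace (- v1 u * v2 u) with (- (v1 u * v2 u)) by ring. apply Hd. lra. }
  rewrite HD0, Hb in P. lra. }
assert (E2 : v1 t - v2 t * t = a * integrating_factor t).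
{ assert (P : (v1 t - v2 t * t) * integrating_factor 0
              = (v1 0 - v2 0 * 0) * integrating_factor t).
  { apply (is_derive_linear_proportional (fun u => v1 u - v2 u * u) integrating_factor
             (fun u => - v1 u) s); [|exact Ht].
    intros u Hu. split; [|split];
      [ apply is_derive_v1_sub_v2_mul
      | apply is_derive_integrating_factor
      | apply Hpos ]; lra. }
  rewrite HD0, Ha in P. lra. }
assert (E3 : v1 t = (a + b * t) * integrating_factor t) by nra.
repeat split; auto.
assert (Hdef : integrating_factor t = 1 - v1 t * t + v2 t * t ^ 2 / 2) by reflexivity.
rewrite E3, E1 in Hdef. unfold denom. nra.
Qed.

(* At a first zero s of the integrating factor, [integrating_factor * denom]
   would jump from 1 to 0, contradicting continuity. *)
Lemma integrating_factor_pos (t : R) : 0 <= t < T -> 0 < integrating_factor t.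
Proof.
intros Ht. apply Rnot_le_lt. intros Hn.
destruct (first_root integrating_factor t) as [s [Hs [Hs0 Hspos]]]; [lra | | lra | |].
- unfold integrating_factor. lra.
- intros u Hu. eapply is_derive_continuity_pt, is_derive_integrating_factor. lra.
- destruct (continuity_pt_lt_left (fun u => integrating_factor u * denom a b u) s 1)
    as [u [Hu Hlt]]; [| lra | |].
  + apply continuity_pt_mult; [|apply continuity_pt_denom].
    eapply is_derive_continuity_pt, is_derive_integrating_factor. lra.
  + simpl. rewrite Hs0. lra.
  + destruct (integrating_factor_mul_denom s ltac:(lra) Hspos u Hu) as [_ [_ E]]. lra.
Qed.

Lemma solution_explicit (t : R) :
  0 <= t < T ->
  0 < denom a b t /\ v1 t = (a + b * t) / denom a b t /\ v2 t = b / denom a b t.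
Proof.
intros Ht.
destruct (integrating_factor_mul_denom T (Rle_refl T) integrating_factor_pos t Ht)
  as [E1 [E2 E3]].
pose proof (integrating_factor_pos t Ht).
assert (Hq : 0 < denom a b t) by nra.
assert (HD : integrating_factor t = / denom a b t).
{ apply (Rmult_eq_reg_r (denom a b t)); [rewrite Rinv_l|]; lra. }
rewrite E1, E2, HD. repeat split; exact Hq.
Qed.

End Uniqueness.

Lemma blowup_condition_of_blows_up (a b : R) :
  blows_up_in_finite_time a b -> blowup_condition a b.
Proof.
intros [T [HT [v1 [v2 [Hsol Hunb]]]]].
apply NNPP. intros Hn.
destruct (not_blowup_condition_denom_lower_bound a b Hn) as [m [Hm Hq]].
apply Hunb. exists ((Rabs a + Rabs b * T + Rabs b) / m). intros t Ht.
destruct (solution_explicit a b T v1 v2 Hsol t Ht) as [Hqt [-> ->]].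
assert (Hmq : m <= denom a b t) by (apply Hq; lra).
assert (Hnum : Rabs (a + b * t) + Rabs b <= Rabs a + Rabs b * T + Rabs b).
{ pose proof (Rabs_triang a (b * t)). rewrite Rabs_mult, (Rabs_pos_eq t) in * by lra.
  pose proof (Rabs_pos b). nra. }
unfold Rdiv. rewrite !Rabs_mult, Rabs_inv, (Rabs_pos_eq (denom a b t)) by lra.
rewrite <- Rmult_plus_distr_r.
apply Rle_trans with ((Rabs a + Rabs b * T + Rabs b) * / denom a b t).
- apply Rmult_le_compat_r; [apply Rlt_le, Rinv_0_lt_compat|]; lra.
- pose proof (Rabs_pos (a + b * t)). pose proof (Rabs_pos b).
  apply Rmult_le_compat_l; [lra|].
  apply Rinv_le_contravar; lra.
Qed.

Lemma explicit_is_solution (a b T : R) :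
  (forall t, 0 <= t < T -> 0 < denom a b t) ->
  is_solution_on a b T (fun t => (a + b * t) / denom a b t) (fun t => b / denom a b t).
Proof.
intros Hpos. unfold denom in *. split; [|split]; [simpl; field | simpl; field |].
intros t Ht. specialize (Hpos t Ht).
split; (auto_derive; [lra | field; lra]).
Qed.

(* Near a root T of [denom a b], the numerators stay away from 0: for b = 0 the
   root forces a <> 0. *)
Lemma explicit_unbounded (a b T : R) :
  0 < T -> denom a b T = 0 -> (forall t, 0 <= t < T -> 0 < denom a b t) ->
  ~ (exists M, forall t, 0 <= t < T ->
       Rabs ((a + b * t) / denom a b t) + Rabs (b / denom a b t) <= M).
Proof.
intros HT HqT Hpos [M HM].
assert (Hnum : 0 < Rabs (a + b * T) + Rabs b).
{ pose proof (Rabs_pos (a + b * T)). destruct (Req_dec b 0) as [->|Hb].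
  - assert (Ha : a <> 0) by (intros ->; unfold denom in HqT; nra).
    rewrite Rmult_0_l, !Rplus_0_r, Rabs_R0, Rplus_0_r. now apply Rabs_pos_lt.
  - pose proof (Rabs_pos_lt b Hb). lra. }
destruct (continuity_pt_lt_left
            (fun t => M * denom a b t - (Rabs (a + b * t) + Rabs b)) T 0)
  as [t [Ht Hlt]]; [unfold denom; reg | exact HT | rewrite HqT; lra |].
specialize (HM t Ht). specialize (Hpos t Ht).
unfold Rdiv in HM. rewrite !Rabs_mult, Rabs_inv, (Rabs_pos_eq (denom a b t)) in HM by lra.
rewrite <- Rmult_plus_distr_r in HM.
apply (Rmult_le_compat_r (denom a b t)) in HM; [|lra].
rewrite Rmult_assoc, Rinv_l in HM by lra. lra.
Qed.

Lemma blows_up_of_blowup_condition (a b : R) :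
  blowup_condition a b -> blows_up_in_finite_time a b.
Proof.
intros Hc. destruct (blowup_condition_denom_nonpos a b Hc) as [t1 [Ht1 Hq1]].
destruct (first_root (denom a b) t1) as [T [HT [HqT Hpos]]];
  [lra | unfold denom; lra | lra | intros; apply continuity_pt_denom |].
exists T. split; [lra|].
exists (fun t => (a + b * t) / denom a b t), (fun t => b / denom a b t).
split; [now apply explicit_is_solution | apply explicit_unbounded; auto; lra].
Qed.

Theorem mainTheorem12 (a b : R) :
  blows_up_in_finite_time a b <->
  (b < 0 \/ (b = 0 /\ a < 0) \/ (0 < b /\ a < 0 /\ 2 * b <= a ^ 2)).
Proof.
split; [apply blowup_condition_of_blows_up | apply blows_up_of_blowup_condition].
Qed.
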